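(* Let $a,b,u,v$ be integers with $b>a\ge2$ and $u,v\ge2$, and set $X:=ab-a-b$. Suppose that (1) $a$, $b$ and $uv-1$ are pairwise coprime; (2) $\frac{1}{a}+\frac{1}{b}+\frac{v}{uv-1}>1$; (3) $vab-1=(uv-1)X$. Then $u\in\{2,3,6\}$; moreover, if $u=6$ then $(a,b)=(2,3)$, i.e. the triple $(a,b,uv-1)$ equals $(2,3,6v-1)$. *)

From Stdlib Require Import ZArith Znumtheory Reals.

(* Rewriting (3) as X - 1 = v (uX - ab) shows that k := uX - ab is a
   nonnegative integer with X = 1 + vk.  If k = 0 then X = 1, which forces
   (a, b) = (2, 3) and u = ab / X = 6.  Otherwise X >= 1 + v >= 3 and
   uX = ab + k <= ab + (X - 1) / 2; since ab / X <= 10/3 whenever X >= 3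
   (equality at (a, b) = (2, 5)), this gives u < 4. *)

From Stdlib Require Import ZArith Znumtheory Reals Lia.

Local Open Scope Z_scope.

Definition frobenius (a b : Z) : Z := a * b - a - b.

Lemma frobenius_ge1 {a b : Z} : 2 <= a -> a < b -> 1 <= frobenius a b.
Proof. unfold frobenius; nia. Qed.

Lemma frobenius_eq1 {a b : Z} :
  2 <= a <= b -> frobenius a b = 1 -> a = 2 /\ b = 3.
Proof. unfold frobenius; nia. Qed.

Lemma frobenius_ge3_mul_bound {a b : Z} :
  2 <= a <= b -> 3 <= frobenius a b -> 2 * (a * b) + 1 <= 7 * frobenius a b.
Proof.
  unfold frobenius; intros [Ha Hab] HX.
  destruct (Z.eq_dec a 2) as [->|Ha2]; [lia|].
  (* 5 (7X - 1 - 2ab) = (5a - 7)(5b - 7) - 54 *)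
  assert (Hprod : 64 <= (5 * a - 7) * (5 * b - 7)) by nia.
  lia.
Qed.

Lemma frobenius_excess_le3 {a b u : Z} :
  2 <= a <= b -> 3 <= frobenius a b ->
  2 * (u * frobenius a b - a * b) <= frobenius a b - 1 -> u <= 3.
Proof.
  intros Hab HX Hk.
  pose proof (frobenius_ge3_mul_bound Hab HX).
  nia.
Qed.

Lemma sub1_eq_mul_excess {N X u v : Z} :
  v * N - 1 = (u * v - 1) * X -> X - 1 = v * (u * X - N).
Proof. lia. Qed.

Theorem lemma3p4 (a b u v : Z) :
  (2 <= a)%Z -> (a < b)%Z -> (2 <= u)%Z -> (2 <= v)%Z ->
  rel_prime a b -> rel_prime a (u * v - 1) -> rel_prime b (u * v - 1) ->
  (1 / IZR a + 1 / IZR b + IZR v / IZR (u * v - 1) > 1)%R ->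
  (v * a * b - 1 = (u * v - 1) * (a * b - a - b))%Z ->
  (u = 2 \/ u = 3 \/ u = 6)%Z /\ (u = 6 -> a = 2 /\ b = 3)%Z.
Proof.
  intros Ha Hab Hu Hv _ _ _ _ E.
  assert (Hab' : 2 <= a <= b) by lia.
  rewrite <- Z.mul_assoc in E.
  pose proof (sub1_eq_mul_excess E) as HX; fold (frobenius a b) in HX.
  pose proof (frobenius_ge1 Ha Hab) as HX1.
  set (X := frobenius a b) in *.
  set (k := u * X - a * b) in HX.
  destruct (Z.eq_dec k 0) as [Hk0|Hk0].
  - assert (HXeq1 : X = 1) by lia.
    destruct (frobenius_eq1 Hab' HXeq1) as [-> ->].
    assert (u = 6) by (unfold k in Hk0; lia).
    lia.
  - assert (Hk : 1 <= k) by nia.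
    assert (HX3 : 3 <= X) by nia.
    assert (u <= 3).
    { apply (frobenius_excess_le3 Hab' HX3); nia. }
    lia.
Qed.
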